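(* Let $\phi$ be the real root of $x^3=x^2+x+1$. For any positive integers $n,k$ with $k\ge 4$, the number of positive tribonacci sequences of length $k$ terminating at $n$ is at most \[\left\lceil 1500\frac{n}{\phi^{3k/2}}\right\rceil^2.\]
   Context: A tribonacci sequence of length $k$ is a sequence of integers $\langle a_i\rangle_{i=1}^k$ such that $a_i=a_{i-1}+a_{i-2}+a_{i-3}$ for all $4\le i\le k$. It terminates at $a_k$, and it is positive if $a_1,a_2,a_3>0$. *)

From HB Require Import structures.
From mathcomp Require Import all_boot all_order all_algebra.
From mathcomp Require Import reals.
Set Implicit Arguments. Unset Strict Implicit. Unset Printing Implicit Defensive.
Import Order.TTheory GRing.Theory Num.Theory.
Local Open Scope ring_scope.

(* A sequence <a_1,...,a_k> is represented as s : seq int of size k,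
   with a_i = s`_(i-1) (0-indexed). *)

Definition is_tribonacci (k : nat) (s : seq int) : Prop :=
  size s = k /\
  forall i : nat, (3 <= i)%N -> (i < k)%N ->
    s`_i = s`_(i - 1) + s`_(i - 2) + s`_(i - 3).

Definition is_positive_seq (s : seq int) : Prop :=
  0 < s`_0 /\ 0 < s`_1 /\ 0 < s`_2.

Definition terminates_at (k : nat) (n : int) (s : seq int) : Prop :=
  s`_(k.-1) = n.

Definition pos_trib_ending (k : nat) (n : int) (s : seq int) : Prop :=
  is_tribonacci k s /\ is_positive_seq s /\ terminates_at k n s.

From HB Require Import structures.
From mathcomp Require Import all_boot all_order all_algebra.
From mathcomp Require Import reals.
From mathcomp Require Import ring lra zify.
Set Implicit Arguments. Unset Strict Implicit. Unset Printing Implicit Defensive.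
Import Order.TTheory GRing.Theory Num.Theory.
Local Open Scope ring_scope.

(* A positive tribonacci sequence is determined by (a_1, a_2, a_3), and two of
   them ending at the same n differ by an integer tribonacci sequence ending at
   0.  Along the recurrence the linear form L x y z = x + (phi^2 - phi) y + phi z
   is multiplied by phi, while the positive quadratic form Q collecting the two
   complex conjugate eigenvalues is divided by phi; their product L * Q is the
   norm form of Z[phi], hence a nonzero integer on nonzero integer triples.  So a
   nonzero triple whose sequence vanishes after k steps has Q of order at least
   phi^k: its first two entries cannot both be much smaller than phi^(k/2).  On
   the other hand a_1, a_2 <= (1 + phi^2) n / phi^(k-3), and cutting this square
   into ceil(1500 n / phi^(3k/2))^2 cells of side of order phi^(k/2) leaves at
   most one sequence per cell. *)

Fixpoint trib (V : nmodType) (n : nat) (x y z : V) : V :=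
  if n is n'.+1 then trib n' y z (x + y + z) else x.

Lemma tribSSS (V : nmodType) n (x y z : V) :
  trib n.+3 x y z = trib n x y z + trib n.+1 x y z + trib n.+2 x y z.
Proof. by elim: n x y z => // n IH x y z; exact: IH. Qed.

Lemma tribB (V : zmodType) n (x y z x' y' z' : V) :
  trib n (x - x') (y - y') (z - z') = trib n x y z - trib n x' y' z'.
Proof.
elim: n x y z x' y' z' => //= n IH x y z x' y' z'.
by rewrite -IH; congr trib; rewrite !opprD [RHS]addrACA (addrACA x).
Qed.

Lemma raddf_trib (U V : zmodType) (f : {additive U -> V}) n x y z :
  f (trib n x y z) = trib n (f x) (f y) (f z).
Proof. by elim: n x y z => //= n IH x y z; rewrite IH !raddfD. Qed.

Lemma trib_linear (R : comPzRingType) n (x y z : R) :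
  trib n x y z = x * trib n 1 0 0 + y * trib n 0 1 0 + z * trib n 0 0 1.
Proof.
elim: n x y z => [|n IH] x y z /=; first by ring.
by rewrite !(add0r, addr0) IH (IH 1 0 1) (IH 0 1 1); ring.
Qed.

Section TribOrder.
Variable R : numDomainType.
Implicit Types x y z : R.

Lemma trib_ge0 n x y z : 0 <= x -> 0 <= y -> 0 <= z -> 0 <= trib n x y z.
Proof.
elim: n x y z => //= n IH x y z x0 y0 z0.
by apply: IH => //; rewrite !addr_ge0.
Qed.

Lemma trib_gt0 n x y z : 0 < x -> 0 < y -> 0 < z -> 0 < trib n x y z.
Proof.
elim: n x y z => //= n IH x y z x0 y0 z0.
by apply: IH => //; rewrite !addr_gt0.
Qed.

Lemma trib_coef_mono n :
  [/\ 0 <= trib n.+3 (1 : R) 0 0, trib n.+3 (1 : R) 0 0 <= trib n.+3 0 1 0,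
      trib n.+3 (0 : R) 1 0 <= trib n.+3 0 0 1 & 0 < trib n.+3 (0 : R) 0 1].
Proof.
split.
- exact: trib_ge0.
- rewrite -subr_ge0 -tribB !(subr0, sub0r) /= !(addNr, addr0, add0r).
  by apply: trib_ge0; rewrite ?ler01.
- rewrite -subr_ge0 -tribB !(subr0, sub0r) /= !(addNr, addr0, add0r).
  by apply: trib_ge0; rewrite ?ler01.
- by rewrite /= !(addr0, add0r); apply: trib_gt0; rewrite ?addr_gt0 ?ltr01.
Qed.

Lemma trib_abs_last_le n x y z : trib n.+3 x y z = 0 -> `|z| <= `|x| + `|y|.
Proof.
have [c1_ge0 c12 c23 c3_gt0] := trib_coef_mono n.
rewrite trib_linear => /eqP; rewrite addrC addr_eq0 => /eqP ez.
rewrite -(ler_pM2r c3_gt0) -[X in _ * X <= _]gtr0_norm // -normrM ez normrN.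
rewrite (le_trans (ler_normD _ _)) // !normrM mulrDl.
rewrite (ger0_norm c1_ge0) (ger0_norm (le_trans c1_ge0 c12)).
by rewrite lerD // ler_wpM2l // (le_trans c12).
Qed.

End TribOrder.

Lemma is_tribonacci_nth k s i :
  is_tribonacci k s -> (i < k)%N -> s`_i = trib i s`_0 s`_1 s`_2.
Proof.
move=> [_ srec]; elim/ltn_ind: i => -[|[|[|i]]] // IH ltik.
by rewrite srec // !subSS !subn0 tribSSS -!IH //; lia.
Qed.

Lemma is_tribonacci_eq k s s' :
  is_tribonacci k s -> is_tribonacci k s' ->
  [/\ s`_0 = s'`_0, s`_1 = s'`_1 & s`_2 = s'`_2] -> s = s'.
Proof.
move=> ts ts' [e0 e1 e2]; have [sz _] := ts; have [sz' _] := ts'.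
apply: (@eq_from_nth _ 0); first by rewrite sz sz'.
by move=> i; rewrite sz => ltik; rewrite !(is_tribonacci_nth _ ltik) // e0 e1 e2.
Qed.

(* The norm from Q(phi) of trib_lform phi x y z, cf. trib_norm_factor. *)
Definition trib_norm (R : comPzRingType) (x y z : R) : R :=
  x ^+ 3 + x ^+ 2 * z + 2 * x ^+ 2 * y - 2 * x * y * z + 2 * x * y ^+ 2
  - x * z ^+ 2 - 2 * y * z ^+ 2 + 2 * y ^+ 3 + z ^+ 3.

Lemma rmorph_trib_norm (R S : comPzRingType) (f : {rmorphism R -> S}) x y z :
  f (trib_norm x y z) = trib_norm (f x) (f y) (f z).
Proof. by rewrite /trib_norm !(rmorphD, rmorphN, rmorphM, rmorphXn, rmorph1). Qed.

Lemma trib_normZ (R : comPzRingType) (c x y z : R) :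
  trib_norm (c * x) (c * y) (c * z) = c ^+ 3 * trib_norm x y z.
Proof. by rewrite /trib_norm; ring. Qed.

Lemma F3_cases (x : 'F_3) : [\/ x = 0, x = 1 | x = 2].
Proof.
by case: x => -[|[|[|//]]] ?; [constructor 1 | constructor 2 | constructor 3];
  apply: val_inj.
Qed.

Lemma trib_norm_F3_eq0 (x y z : 'F_3) :
  trib_norm x y z = 0 -> [/\ x = 0, y = 0 & z = 0].
Proof. by case: (F3_cases x) (F3_cases y) (F3_cases z) => -> [] -> [] -> /eqP. Qed.

(* Infinite descent: trib_norm has no nontrivial zero mod 3, so an integer zero
   is 3 times another one. *)
Lemma trib_norm_int_eq0 (x y z : int) :
  trib_norm x y z = 0 -> [/\ x = 0, y = 0 & z = 0].
Proof.
move: {2}(`|x| + `|y| + `|z|)%N (leqnn (`|x| + `|y| + `|z|)) => N.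
elim: N x y z => [|N IH] x y z leN Fxyz; first by split; lia.
have dvd3 (t : int) : t%:~R = 0 :> 'F_3 -> t = 3 * (t %/ 3)%Z.
  by move=> /eqP; rewrite -(dvdz_pcharf (pchar_Fp (isT : prime 3))) mulrC => /divzK.
have [/dvd3 ex /dvd3 ey /dvd3 ez] :
    [/\ x%:~R = 0 :> 'F_3, y%:~R = 0 :> 'F_3 & z%:~R = 0 :> 'F_3].
  by apply: trib_norm_F3_eq0; rewrite -(rmorph_trib_norm (intr : int -> 'F_3)) Fxyz rmorph0.
move: Fxyz; rewrite ex ey ez trib_normZ => /eqP; rewrite mulf_eq0 /= => /eqP F0.
have [|a0 b0 c0] := IH _ _ _ _ F0; first lia.
by rewrite ex ey ez a0 b0 c0 !mulr0.
Qed.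

Lemma trib_norm_sqr_ge1 (R : numDomainType) (x y z : int) :
  (x, y, z) != (0, 0, 0) -> 1 <= trib_norm x%:~R y%:~R z%:~R ^+ 2 :> R.
Proof.
move=> nz; rewrite -(rmorph_trib_norm intr) -rmorphXn ler1z /=.
have : trib_norm x y z != 0.
  by apply: contra nz => /eqP/trib_norm_int_eq0[-> -> ->].
by move: (trib_norm x y z) => F; rewrite expr2; nia.
Qed.

Section TribForms.
Variables (R : comPzRingType) (phi : R).
Hypothesis phi_root : phi ^+ 3 = phi ^+ 2 + phi + 1.
Implicit Types x y z : R.

Definition trib_lform x y z := x + (phi ^+ 2 - phi) * y + phi * z.

(* The product of the two complex conjugates of trib_lform. *)
Definition trib_qform x y z :=
  x ^+ 2 + x * z + 2 * x * y + y ^+ 2 - z ^+ 2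
  + phi * (- x * z - z ^+ 2 + x * y + 2 * y ^+ 2 + y * z)
  + phi ^+ 2 * (z ^+ 2 - y * z - x * y - y ^+ 2).

Lemma eq_mod_phi_root a b c : a - b = (phi ^+ 3 - phi ^+ 2 - phi - 1) * c -> a = b.
Proof. by move=> e; apply/eqP; rewrite -subr_eq0 e phi_root; apply/eqP; ring. Qed.

Lemma trib_lformS x y z : trib_lform y z (x + y + z) = phi * trib_lform x y z.
Proof. by apply: (@eq_mod_phi_root _ _ (- y)); rewrite /trib_lform; ring. Qed.

Lemma trib_qformS x y z : phi * trib_qform y z (x + y + z) = trib_qform x y z.
Proof.
apply: (@eq_mod_phi_root _ _ (- z ^+ 2 + y ^+ 2 + x * z + 2 * x * y + x ^+ 2)).
by rewrite /trib_qform; ring.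
Qed.

Lemma trib_norm_factor x y z : trib_norm x y z = trib_lform x y z * trib_qform x y z.
Proof.
apply: (@eq_mod_phi_root _ _ (- (z ^+ 3 - 2 * y * z ^+ 2 + y * z ^+ 2 * phi
  - y ^+ 2 * z * phi + 2 * y ^+ 3 - y ^+ 3 * phi - 2 * x * y * z + x * y ^+ 2
  - x * y ^+ 2 * phi))).
by rewrite /trib_norm /trib_qform /trib_lform; ring.
Qed.

Lemma trib_lform_trib n x y z :
  trib_lform (trib n x y z) (trib n.+1 x y z) (trib n.+2 x y z)
  = phi ^+ n * trib_lform x y z.
Proof.
elim: n x y z => [|n IH] x y z; first by rewrite mul1r.
by rewrite exprSr -mulrA -trib_lformS; apply: IH.
Qed.

Lemma trib_qform_trib n x y z :
  phi ^+ n * trib_qform (trib n x y z) (trib n.+1 x y z) (trib n.+2 x y z)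
  = trib_qform x y z.
Proof.
elim: n x y z => [|n IH] x y z; first by rewrite mul1r.
by rewrite exprS -mulrA; rewrite [X in _ * X]IH trib_qformS.
Qed.

End TribForms.

Section PhiBounds.
Variables (R : realFieldType) (phi : R).
Hypothesis phi_root : phi ^+ 3 = phi ^+ 2 + phi + 1.
Implicit Types x y z p q d : R.

Lemma phi_gt1 : 1 < phi.
Proof.
move: phi_root; rewrite !exprS expr0 !mulr1 => e.
have : 0 < phi by rewrite ltNge; apply/negP => ?; nra.
nra.
Qed.

Lemma phi_gt0 : 0 < phi.
Proof. exact: lt_trans ltr01 phi_gt1. Qed.

Lemma phi_bounds : 183 / 100 <= phi <= 185 / 100.
Proof.
move: phi_gt1 phi_root; rewrite !exprS expr0 => gt1 e.
by apply/andP; split; nra.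
Qed.

Lemma trib_lform_sqr_le_qform p q :
  trib_lform phi p q 0 ^+ 2 <= 12 * trib_qform phi p q 0.
Proof.
have /andP[phi_ge phi_le] := phi_bounds.
set d := 2 + phi - phi ^+ 2; set g := phi ^+ 2 - phi.
have [d_ge0 d_le] : 0 <= d /\ d <= 6 / 10 by rewrite /d expr2; split; nra.
have [g_ge0 g_le] : 0 <= g /\ g <= 17 / 10 by rewrite /g expr2; split; nra.
have b_ge : 12 / 10 <= 1 + 2 * phi - phi ^+ 2 by rewrite expr2; nra.
rewrite -subr_ge0 (_ : _ - _ = 6 * (p + d * q) ^+ 2 + (p - g * q) ^+ 2 + 4 * p ^+ 2
  + (12 * (1 + 2 * phi - phi ^+ 2) - 6 * d ^+ 2 - 2 * g ^+ 2) * q ^+ 2); last first.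
  by rewrite /trib_qform /trib_lform /d /g; ring.
have c_ge0 : 0 <= 12 * (1 + 2 * phi - phi ^+ 2) - 6 * d ^+ 2 - 2 * g ^+ 2.
  by rewrite !expr2; nra.
by rewrite !addr_ge0 ?sqr_ge0 // mulr_ge0 ?sqr_ge0.
Qed.

Lemma trib_qform_end_ge0 p q : 0 <= trib_qform phi p q 0.
Proof.
by rewrite -(pmulr_rge0 _ (_ : 0 < 12)) // (le_trans (sqr_ge0 _) (trib_lform_sqr_le_qform _ _)).
Qed.

Lemma trib_qform_le x y z : trib_qform phi x y z <= 4 * (x ^+ 2 + y ^+ 2 + z ^+ 2).
Proof.
have /andP[phi_ge phi_le] := phi_bounds.
rewrite -(ler_pM2l (_ : 0 < 2)) // -subr_ge0.
rewrite (_ : _ - _ = (2 + phi - phi ^+ 2) * (x - y) ^+ 2 + (phi - 1) * (x + z) ^+ 2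
  + (phi ^+ 2 - phi) * (y + z) ^+ 2 + (5 - 2 * phi + phi ^+ 2) * x ^+ 2
  + (4 - 4 * phi + 2 * phi ^+ 2) * y ^+ 2 + (11 + 2 * phi - 3 * phi ^+ 2) * z ^+ 2);
  last by rewrite /trib_qform; ring.
by rewrite !addr_ge0 // mulr_ge0 ?sqr_ge0 //; rewrite ?expr2; nra.
Qed.

Lemma trib_qform_vanish_ge0 n x y z : trib n.+2 x y z = 0 -> 0 <= trib_qform phi x y z.
Proof.
move=> end0; rewrite -(trib_qform_trib phi_root n) end0.
by rewrite mulr_ge0 ?trib_qform_end_ge0 // exprn_ge0 // ltW // phi_gt0.
Qed.

Lemma trib_norm_sqr_growth n x y z : trib n.+2 x y z = 0 ->
  phi ^+ (3 * n) * trib_norm x y z ^+ 2 <= 12 * trib_qform phi x y z ^+ 3.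
Proof.
move=> end0; have Q_ge0 := trib_qform_vanish_ge0 end0.
have eL := trib_lform_trib phi_root n x y z.
have eQ := trib_qform_trib phi_root n x y z.
rewrite end0 in eL eQ.
set p := trib n x y z in eL eQ; set q := trib n.+1 x y z in eL eQ.
set P := phi ^+ n in eL eQ; set Q := trib_qform phi x y z in eQ Q_ge0 *.
have P_ge0 : 0 <= P by rewrite exprn_ge0 // ltW // phi_gt0.
rewrite (trib_norm_factor phi_root) -/Q mulnC exprM -/P.
rewrite (_ : P ^+ 3 * (trib_lform phi x y z * Q) ^+ 2
  = (P * trib_lform phi x y z) ^+ 2 * (P * Q ^+ 2)); last by ring.
rewrite -eL (le_trans (ler_wpM2r _ (trib_lform_sqr_le_qform _ _))) ?mulr_ge0 ?sqr_ge0 //.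
rewrite (_ : 12 * _ * (P * Q ^+ 2) = 12 * (P * trib_qform phi p q 0) * Q ^+ 2); last by ring.
by rewrite eQ -mulrA -exprS.
Qed.

Lemma trib_vanish_norm_bound n x y z d : trib n.+3 x y z = 0 ->
  `|x| <= d -> `|y| <= d ->
  phi ^+ (3 * n.+1) * trib_norm x y z ^+ 2 <= 12 * (24 * d ^+ 2) ^+ 3.
Proof.
move=> end0 xd yd.
have zd : `|z| <= 2 * d by have := trib_abs_last_le end0; lra.
have sqr_le (a b : R) : `|a| <= b -> a ^+ 2 <= b ^+ 2.
  move=> ab; have b_ge0 : 0 <= b := le_trans (normr_ge0 a) ab.
  by rewrite -real_normK ?num_real // ler_sqr // nnegrE.
have Q_le : trib_qform phi x y z <= 24 * d ^+ 2.
  rewrite (le_trans (trib_qform_le x y z)) //.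
  have := sqr_le _ _ xd; have := sqr_le _ _ yd; have := sqr_le _ _ zd.
  rewrite !expr2; lra.
rewrite (le_trans (trib_norm_sqr_growth end0)) // ler_pM2l // ler_pXn2r // nnegrE.
  exact: trib_qform_vanish_ge0 end0.
exact: le_trans (trib_qform_vanish_ge0 end0) Q_le.
Qed.

Lemma trib_init_le n x y z : 0 <= x -> 0 <= y -> 0 <= z ->
  x * phi ^+ n.+1 <= (1 + phi ^+ 2) * trib n.+3 x y z /\
  y * phi ^+ n.+1 <= (1 + phi ^+ 2) * trib n.+3 x y z.
Proof.
move=> x0 y0 z0; have /andP[phi_ge phi_le] := phi_bounds.
have g_ge1 : 1 <= phi ^+ 2 - phi by rewrite expr2; nra.
have L_le : phi ^+ n.+1 * trib_lform phi x y z <= (1 + phi ^+ 2) * trib n.+3 x y z.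
  rewrite -(trib_lform_trib phi_root) /trib_lform tribSSS.
  have := trib_ge0 n x0 y0 z0; have := trib_ge0 n.+1 x0 y0 z0.
  have := trib_ge0 n.+2 x0 y0 z0; nra.
have P_ge0 : 0 <= phi ^+ n.+1 by rewrite exprn_ge0 // ltW // phi_gt0.
by split; apply: le_trans L_le; rewrite mulrC ler_wpM2l // /trib_lform; nra.
Qed.

Lemma small_side_lt_phi_pow n d :
  (1500 * d) ^+ 2 <= (1 + phi ^+ 2) ^+ 2 * phi ^+ (n + 9) ->
  12 * (24 * d ^+ 2) ^+ 3 < phi ^+ (3 * n).
Proof.
have /andP[phi_ge phi_le] := phi_bounds.
rewrite exprD mulnC exprM; set T := phi ^+ n => dT.
have T_gt0 : 0 < T by rewrite exprn_gt0 // phi_gt0.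
have phi9 : phi ^+ 9 <= 2 ^+ 9 by rewrite ler_pXn2r ?nnegrE //; lra.
have c25 : (1 + phi ^+ 2) ^+ 2 <= 25.
  have : 1 + phi ^+ 2 <= 5 by rewrite expr2; nra.
  have : 0 <= 1 + phi ^+ 2 by rewrite addr_ge0 ?sqr_ge0.
  set s := 1 + phi ^+ 2; rewrite expr2; nra.
have d2_le : d ^+ 2 <= 25 * 2 ^+ 9 / 1500 ^+ 2 * T.
  have : (1 + phi ^+ 2) ^+ 2 * (T * phi ^+ 9) <= 25 * (T * 2 ^+ 9).
    apply: ler_pM (sqr_ge0 _) _ c25 (ler_wpM2l (ltW T_gt0) phi9).
    by rewrite mulr_ge0 ?exprn_ge0 ?(ltW T_gt0) //; lra.
  move: dT; rewrite exprMn; lra.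
have : (d ^+ 2) ^+ 3 <= (25 * 2 ^+ 9 / 1500 ^+ 2 * T) ^+ 3.
  by rewrite ler_pXn2r ?nnegrE ?sqr_ge0 // (le_trans (sqr_ge0 d) d2_le).
rewrite exprMn [in X in _ -> X]exprMn; have := exprn_gt0 3 T_gt0; lra.
Qed.

Lemma trib_int_separation n (x y z x' y' z' : int) d :
  trib n.+3 x y z = trib n.+3 x' y' z' ->
  `|(x - x')%:~R| <= d -> `|(y - y')%:~R| <= d ->
  (1500 * d) ^+ 2 <= (1 + phi ^+ 2) ^+ 2 * phi ^+ (n + 10) ->
  (x, y, z) = (x', y', z').
Proof.
move=> eq_end xd yd; rewrite -addSnnS => /small_side_lt_phi_pow small.
apply/eqP; apply: contraT => neq.
have nz : (x - x', y - y', z - z') != (0, 0, 0) by rewrite !xpair_eqE !subr_eq0.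
have end0 : trib n.+3 (x - x')%:~R (y - y')%:~R (z - z')%:~R = 0 :> R.
  by rewrite -(raddf_trib intr) tribB eq_end subrr.
have := trib_vanish_norm_bound end0 xd yd; have := trib_norm_sqr_ge1 R nz.
have := exprn_gt0 (3 * n.+1) phi_gt0; nra.
Qed.

End PhiBounds.

Lemma pos_trib_ending_trib k n s :
  pos_trib_ending k.+1 n s -> trib k s`_0 s`_1 s`_2 = n.
Proof. by move=> [ts [_ <-]]; rewrite -(is_tribonacci_nth ts). Qed.

Lemma size_le_grid (T : eqType) (L : seq T) (f : T -> int * int) (m : int) :
  uniq L -> {in L &, injective f} ->
  {in L, forall s, [/\ 0 <= (f s).1 < m & 0 <= (f s).2 < m]} ->
  (size L)%:Z <= m ^+ 2.
Proof.
move=> uL f_inj f_grid.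
pose g s := (`|(f s).1|%N, `|(f s).2|%N).
have g_inj : {in L &, injective g}.
  move=> s s' sL s'L [e1 e2]; apply: f_inj => //.
  have [/andP[s1 _] /andP[s2 _]] := f_grid s sL.
  have [/andP[s'1 _] /andP[s'2 _]] := f_grid s' s'L.
  by apply/pair_eqP; rewrite /= -(gez0_abs s1) -(gez0_abs s2) e1 e2 !gez0_abs ?eqxx.
have g_sub : {subset map g L <= [seq (a, b) | a <- iota 0 `|m|, b <- iota 0 `|m|]}.
  move=> _ /mapP[s sL ->]; have [/andP[s1 m1] /andP[s2 m2]] := f_grid s sL.
  by apply: allpairs_f; rewrite mem_iota /=; lia.
have := uniq_leq_size (etrans (map_inj_in_uniq g_inj) uL) g_sub.
by rewrite size_map size_allpairs size_iota expr2; nia.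
Qed.

Lemma floor_div_eq_dist (R : archiRealFieldType) (w a b : R) : 0 < w ->
  Num.floor (a / w) = Num.floor (b / w) -> `|a - b| < w.
Proof.
move=> w_gt0 eq_floor.
have /andP[a1 a2] := floor_itv (a / w); have /andP[b1 b2] := floor_itv (b / w).
rewrite eq_floor intrD in a1 a2; rewrite intrD in b2.
have : `|a / w - b / w| < 1 by rewrite ltr_norml; apply/andP; split; lra.
by rewrite -mulrBl normrM [`|w^-1|]gtr0_norm ?invr_gt0 // ltr_pdivrMr // mul1r.
Qed.

Lemma floor_div_bound (R : archiRealFieldType) (w a : R) (m : int) : 0 < w ->
  0 <= a -> a < m%:~R * w -> 0 <= Num.floor (a / w) < m.
Proof.
move=> w_gt0 a_ge0 a_lt; apply/andP; split.
  by rewrite floor_ge0 divr_ge0 // ltW.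
by rewrite floor_lt_int ltr_pdivrMr.
Qed.

Section InitialCells.
Variables (R : archiRealFieldType) (phi : R).
Hypothesis phi_root : phi ^+ 3 = phi ^+ 2 + phi + 1.
Variables (j n : nat) (w : R).
Hypothesis w_gt0 : 0 < w.

Definition init_cell (s : seq int) : int * int :=
  (Num.floor ((s`_0 - 1)%:~R / w), Num.floor ((s`_1 - 1)%:~R / w)).

Lemma init_cell_grid (m : int) s :
  (1 + phi ^+ 2) * n%:R <= m%:~R * w * phi ^+ j.+1 ->
  pos_trib_ending j.+4 n s ->
  [/\ 0 <= (init_cell s).1 < m & 0 <= (init_cell s).2 < m].
Proof.
move=> mw ps; have [_ [[s0 [s1 s2]] _]] := ps.
have P_gt0 : 0 < phi ^+ j.+1 by rewrite exprn_gt0 // (phi_gt0 phi_root).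
have end_n : trib j.+3 (s`_0)%:~R (s`_1)%:~R (s`_2)%:~R = n%:R :> R.
  by rewrite -(raddf_trib intr) (pos_trib_ending_trib ps).
have init_ge0 (i : nat) : 0 < s`_i -> 0 <= (s`_i)%:~R :> R by move=> /ltW; rewrite ler0z.
have [] := trib_init_le phi_root j (init_ge0 0%N s0) (init_ge0 1%N s1) (init_ge0 2%N s2).
rewrite end_n => b0 b1.
have cell_lt (t : int) : 0 < t -> t%:~R * phi ^+ j.+1 <= (1 + phi ^+ 2) * n%:R ->
    0 <= Num.floor ((t - 1)%:~R / w) < m.
  move=> t_gt0 tb; have := le_trans tb mw; rewrite ler_pM2r // => tm.
  by apply: floor_div_bound; rewrite // intrB ?subr_ge0 ?ler1z //; lra.
by split; apply: cell_lt.
Qed.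

Lemma init_cell_inj s s' :
  (1500 * w) ^+ 2 <= (1 + phi ^+ 2) ^+ 2 * phi ^+ (j + 10) ->
  pos_trib_ending j.+4 n s -> pos_trib_ending j.+4 n s' ->
  init_cell s = init_cell s' -> s = s'.
Proof.
move=> small ps ps' [e0 e1].
have close (t t' : int) : Num.floor ((t - 1)%:~R / w) = Num.floor ((t' - 1)%:~R / w) ->
    `|(t - t')%:~R| <= w.
  by move=> /(floor_div_eq_dist w_gt0) /ltW; rewrite -intrB opprB addrA subrK.
have end_eq : trib j.+3 s`_0 s`_1 s`_2 = trib j.+3 s'`_0 s'`_1 s'`_2.
  by rewrite (pos_trib_ending_trib ps) (pos_trib_ending_trib ps').
have [ts _] := ps; have [ts' _] := ps'.
case: (trib_int_separation phi_root end_eq (close _ _ e0) (close _ _ e1) small).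
by move=> f0 f1 f2; apply: is_tribonacci_eq ts ts' _.
Qed.

End InitialCells.

Unset Implicit Arguments.

Theorem theorem2 (R : realType) (phi : R)
  (hphi : phi ^+ 3 = phi ^+ 2 + phi + 1)
  (n k : nat) (hn : (0 < n)%N) (hk : (4 <= k)%N) :
  forall L : seq (seq int), uniq L ->
    (forall s, s \in L -> pos_trib_ending k (n%:Z) s) ->
    ((size L)%:Z <= (Num.ceil (1500 * n%:R / Num.sqrt (phi ^+ (3 * k)))) ^+ 2).
Proof.
have [j ->] : exists j, k = j.+4 by exists (k - 4)%N; lia.
move=> L uL Lpos.
have phi_pos := phi_gt0 hphi.
have P_gt0 : 0 < phi ^+ j.+1 by rewrite exprn_gt0.
have c_gt0 : 0 < 1 + phi ^+ 2 by rewrite addr_gt0 ?exprn_gt0.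
set r := Num.sqrt _; set m := Num.ceil _.
have r_gt0 : 0 < r by rewrite sqrtr_gt0 exprn_gt0.
have r2 : r ^+ 2 = phi ^+ j.+1 ^+ 2 * phi ^+ (j + 10).
  by rewrite sqr_sqrtr ?exprn_ge0 ?ltW // -exprM -exprD; congr (_ ^+ _); lia.
(* The cell side, chosen to meet the hypothesis of trib_int_separation exactly. *)
pose w := (1 + phi ^+ 2) * r / (1500 * phi ^+ j.+1).
have w_gt0 : 0 < w by rewrite divr_gt0 ?mulr_gt0.
have w_small : (1500 * w) ^+ 2 = (1 + phi ^+ 2) ^+ 2 * phi ^+ (j + 10).
  by rewrite /w !exprMn r2; field; rewrite gt_eqF.
have m_large : (1 + phi ^+ 2) * n%:R <= m%:~R * w * phi ^+ j.+1.
  have mr : 1500 * n%:R <= m%:~R * r by rewrite -ler_pdivrMr // ceil_ge.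
  rewrite (_ : _ * w * _ = m%:~R * r * ((1 + phi ^+ 2) / 1500)); last first.
    by rewrite /w; field; rewrite gt_eqF.
  rewrite (_ : _ * n%:R = 1500 * n%:R * ((1 + phi ^+ 2) / 1500)); last by field.
  by rewrite ler_wpM2r // divr_ge0 // ltW.
apply: (size_le_grid uL (f := init_cell w)).
  by move=> s s' /Lpos ps /Lpos ps'; apply: (init_cell_inj hphi w_gt0 _ ps ps'); rewrite w_small.
by move=> s /Lpos; apply: (init_cell_grid hphi w_gt0 m_large).
Qed.
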